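(* Let $I$ be a set, and for $n < \omega$ let $G_n \subseteq G_{n+1}$ be locally finite groups. For $t \in I$ and $n < \omega$ let $a^t_n \in G_{n+1}$ and $b^t_n = a^t_0 a^t_1 \cdots a^t_n$ (product in $G_{n+1}$); let $\bar a_n = \langle a^t_n : t \in I\rangle$ and $\bar b_n = \langle b^t_n : t \in I\rangle$. Assume: (α) for every $n$, $\mathrm{tp}_{\mathrm{bs}}(\bar a_n,G_n,G_{n+1}) \subseteq \mathrm{tp}_{\mathrm{bs}}(\bar a_{n+1},G_{n+1},G_{n+2})$ (both viewed as types in the variables $\langle x_t : t\in I\rangle$); (β) for every $n$, the subgroup of $G_{n+1}$ generated by $\{a^t_n : t \in I\}$ intersects $G_n$ in $\{e\}$; (e) each $a^t_n$ commutes with every element of $G_n$. Let $G_\omega = \bigcup_{n<\omega} G_n$. Then there are a locally finite group $G_{\omega+1}$ and elements $b^t_\omega$ ($t \in I$) such that $G_\omega \subseteq G_{\omega+1} = \langle G_\omega \cup \{b^t_\omega : t \in I\}\rangle$ and, with $\bar b_\omega = \langle b^t_\omega : t \in I\rangle$, for every $n < \omega$ we have $\mathrm{tp}_{\mathrm{bs}}(\bar b_\omega,G_n,G_{\omega+1}) = \mathrm{tp}_{\mathrm{bs}}(\bar b_n,G_n,G_{n+1})$.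
   Context: A group is locally finite if every finitely generated subgroup is finite. For $A \subseteq H$ and a (possibly infinite) tuple $\bar a = \langle a_t : t \in I\rangle$ from $H$, $\mathrm{tp}_{\mathrm{bs}}(\bar a,A,H)$ is the set of formulas $\sigma(\bar x,\bar c) = e$ and $\sigma(\bar x,\bar c) \neq e$, where $\sigma$ is a group word in finitely many of the variables $x_t$ ($t\in I$) and a finite tuple of further variables, and $\bar c$ is a finite tuple from $A$, which are satisfied in $H$ when $x_t$ is interpreted as $a_t$. *)

From Stdlib Require Import List.

Record group := Group {
  carrier :> Type;
  gmul : carrier -> carrier -> carrier;
  ginv : carrier -> carrier;
  gone : carrier;
  gmulA : forall x y z, gmul x (gmul y z) = gmul (gmul x y) z;
  gmul1 : forall x, gmul gone x = x;
  gmulV : forall x, gmul (ginv x) x = gone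
}.

Arguments gmul {g} _ _.
Arguments ginv {g} _.
Arguments gone {g}.

Inductive gen {H : group} (X : H -> Prop) : H -> Prop :=
| gen_base : forall x, X x -> gen X x
| gen_one : gen X gone
| gen_mul : forall x y, gen X x -> gen X y -> gen X (gmul x y)
| gen_inv : forall x, gen X x -> gen X (ginv x).

Definition is_subgroup {H : group} (S : H -> Prop) : Prop :=
  S gone /\ (forall x y, S x -> S y -> S (gmul x y)) /\ (forall x, S x -> S (ginv x)).

Definition locally_finite {H : group} (S : H -> Prop) : Prop :=
  forall l : list H, (forall x, In x l -> S x) ->
    exists s : list H, forall x, gen (fun y => In y l) x -> In x s.

Inductive word (X : Type) : Type :=
| wvar : X -> word X
| wone : word X
| wmul : word X -> word X -> word X
| winv : word X -> word X.
Arguments wvar {X} _.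
Arguments wone {X}.
Arguments wmul {X} _ _.
Arguments winv {X} _.

Fixpoint weval {X : Type} {H : group} (v : X -> H) (w : word X) : H :=
  match w with
  | wvar x => v x
  | wone => gone
  | wmul u u' => gmul (weval v u) (weval v u')
  | winv u => ginv (weval v u)
  end.

(* Variables: x_t (t : I) and parameter variables, instantiated by P-values. *)
Fixpoint params_in {I P : Type} (A : P -> Prop) (w : word (I + P)) : Prop :=
  match w with
  | wvar (inl _) => True
  | wvar (inr c) => A c
  | wone => True
  | wmul u u' => params_in A u /\ params_in A u'
  | winv u => params_in A u
  end.

(* A basic formula: (true, sigma) means sigma = e, (false, sigma) means sigma <> e. *)
Definition bformula (I P : Type) : Type := (bool * word (I + P))%type.

(* tp_bs(a, A, H): parameters range over P, with A a subset of P and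
   emb : P -> H interpreting the parameters inside H. *)
Definition tp_bs {I P : Type} {H : group} (a : I -> H) (A : P -> Prop) (emb : P -> H)
  (phi : bformula I P) : Prop :=
  params_in A (snd phi) /\
  let v := fun z => match z with inl t => a t | inr c => emb c end in
  if fst phi then weval v (snd phi) = gone else weval v (snd phi) <> gone.

Fixpoint bprod {I : Type} {H : group} (a : I -> nat -> H) (t : I) (n : nat) : H :=
  match n with
  | O => a t O
  | S m => gmul (bprod a t m) (a t (S m))
  end.

From Stdlib Require Import List Lia ClassicalEpsilon FunctionalExtensionality
  PropExtensionality ProofIrrelevance.

(* Take the words in letters [x_t] with parameters from [G_omega], and identify two words when
   their values at [b_m] agree for all large [m]; the quotient is [G_(omega+1)] with
   [b^t_omega] the class of [x_t].  Everything rests on a stability property: for a word [w]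
   with parameters in [G_n], [w(b_m) = e] iff [w(b_n) = e] for all [m >= n].  Indeed, as
   [b_m = b_(m-1) a_m] and [a_m] commutes with [G_m], the value [w(b_m)] factors as
   [w(b_(m-1)) w(a_m)], a product of elements of [G_m] and of [<a_m>], which meet trivially by
   (beta); and by (alpha) an equation [w(a_m) = e] (parameters erased) persists at [m+1].
   Stability also makes evaluation at [b_n] an embedding of the classes of such words into the
   locally finite group [G_(n+1)], whence local finiteness. *)

Lemma gmulxV (H : group) (x : H) : gmul x (ginv x) = gone.
Proof.
  rewrite <- (gmul1 H (gmul x (ginv x))), <- (gmulV H (ginv x)) at 1.
  rewrite <- gmulA, (gmulA H (ginv x) x (ginv x)), gmulV, gmul1.
  apply gmulV.
Qed.

Lemma gmulx1 (H : group) (x : H) : gmul x gone = x.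
Proof. now rewrite <- (gmulV H x), gmulA, gmulxV, gmul1. Qed.

Lemma ginv_unique (H : group) (x y : H) : gmul x y = gone -> y = ginv x.
Proof.
  intro E. now rewrite <- (gmul1 H y), <- (gmulV H x), <- gmulA, E, gmulx1.
Qed.

Lemma ginv_unique_l (H : group) (x y : H) : gmul y x = gone -> y = ginv x.
Proof.
  intro E. now rewrite <- (gmulx1 H y), <- (gmulxV H x), gmulA, E, gmul1.
Qed.

Lemma ginvM (H : group) (x y : H) : ginv (gmul x y) = gmul (ginv y) (ginv x).
Proof.
  symmetry. apply ginv_unique.
  now rewrite <- gmulA, (gmulA H y (ginv y)), gmulxV, gmul1, gmulxV.
Qed.

Lemma eq_mulV1 (H : group) (x y : H) : x = y <-> gmul x (ginv y) = gone.
Proof.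
  split; intro E.
  - subst. apply gmulxV.
  - apply ginv_unique_l in E. rewrite E. symmetry. apply ginv_unique. apply gmulV.
Qed.

Lemma idempotent_eq1 (H : group) (x : H) : gmul x x = x -> x = gone.
Proof.
  intro E.
  transitivity (gmul (ginv x) (gmul x x)); [now rewrite gmulA, gmulV, gmul1|].
  now rewrite E, gmulV.
Qed.

Lemma gen_subgroup (H : group) (X : H -> Prop) : is_subgroup (gen X).
Proof. repeat split; auto using gen_one, gen_mul, gen_inv. Qed.

Lemma gen_comm (H : group) (X : H -> Prop) (u : H) :
  (forall s, X s -> gmul s u = gmul u s) -> forall v, gen X v -> gmul v u = gmul u v.
Proof.
  intros Hs v Hv; induction Hv as [x Hx| |x y _ IHx _ IHy|x _ IHx]; auto.
  - now rewrite gmul1, gmulx1.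
  - now rewrite <- gmulA, IHy, gmulA, IHx, gmulA.
  - (* conjugate [x u = u x] by [x^-1] on both sides *)
    apply (f_equal (fun z => gmul (ginv x) (gmul z (ginv x)))) in IHx.
    rewrite <- (gmulA H u x), gmulxV, gmulx1, !gmulA, gmulV, gmul1 in IHx.
    now symmetry.
Qed.

Lemma locally_finite_of_embedding (V H : group) (S : V -> Prop) (T : H -> Prop) (phi : V -> H) :
  is_subgroup S -> locally_finite T ->
  (forall x, S x -> T (phi x)) ->
  (forall x y, S x -> S y -> phi (gmul x y) = gmul (phi x) (phi y)) ->
  (forall x y, S x -> S y -> phi x = phi y -> x = y) ->
  locally_finite S.
Proof.
  intros HS HT ST phiM phi_inj l lS.
  destruct HS as (S1 & Smul & Sinv).
  assert (phi1 : phi gone = gone).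
  { apply idempotent_eq1. rewrite <- phiM by exact S1. now rewrite gmul1. }
  assert (phiV : forall x, S x -> phi (ginv x) = ginv (phi x)).
  { intros x Sx. apply ginv_unique_l. rewrite <- phiM, gmulV by auto. exact phi1. }
  assert (gen_l : forall y, gen (fun z => In z l) y ->
                    S y /\ gen (fun u => In u (map phi l)) (phi y)).
  { intros y Hy; induction Hy as [x Hx| |x y _ [Sx IHx] _ [Sy IHy]|x _ [Sx IHx]].
    - split; auto. apply gen_base, in_map, Hx.
    - rewrite phi1. split; auto using gen_one.
    - rewrite phiM; auto using gen_mul.
    - rewrite phiV; auto using gen_inv. }
  destruct (HT (map phi l)) as [s Hs].
  { intros u Hu. apply in_map_iff in Hu as (x & <- & Hx). auto. }
  set (psi := fun u => epsilon (inhabits gone) (fun x => S x /\ phi x = u)).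
  exists (map psi s). intros y Hy. destruct (gen_l y Hy) as [Sy Gy].
  assert (Epsi : S (psi (phi y)) /\ phi (psi (phi y)) = phi y)
    by (apply epsilon_spec; eauto).
  replace y with (psi (phi y)) by (apply phi_inj; tauto).
  now apply in_map, Hs.
Qed.

Definition assign {X P : Type} {H : group} (x : X -> H) (p : P -> H) (z : X + P) : H :=
  match z with inl t => x t | inr c => p c end.

Lemma params_in_mono {X P : Type} (A B : P -> Prop) (w : word (X + P)) :
  (forall c, A c -> B c) -> params_in A w -> params_in B w.
Proof. intro AB; induction w as [[t|c]| |u IHu u' IHu'|u IHu]; simpl; intuition. Qed.

Lemma weval_assign_in {X P : Type} {H : group} (S : H -> Prop) (A : P -> Prop)
  (x : X -> H) (p : P -> H) (w : word (X + P)) :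
  is_subgroup S -> (forall t, S (x t)) -> (forall c, A c -> S (p c)) ->
  params_in A w -> S (weval (assign x p) w).
Proof.
  intros (S1 & Smul & Sinv) Sx Sp.
  induction w as [[t|c]| |u IHu u' IHu'|u IHu]; simpl; intuition.
Qed.

(* Splitting [w(x_t y_t)] as [w(x_t) w(y_t)], with the parameters kept in the first factor,
   works because every [y_t] commutes with the subgroup containing all [x_t] and parameters. *)
Lemma weval_assign_mul {X : Type} {H : group} (A Y : H -> Prop) (x y : X -> H)
  (w : word (X + H)) :
  is_subgroup A -> (forall u s, A u -> Y s -> gmul s u = gmul u s) ->
  (forall t, A (x t)) -> (forall t, Y (y t)) -> params_in A w ->
  weval (assign (fun t => gmul (x t) (y t)) (fun c => c)) w
  = gmul (weval (assign x (fun c => c)) w) (weval (assign y (fun _ => gone)) w).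
Proof.
  intros HA comm Ax Yy.
  assert (comm_gen : forall u v, A u -> gen Y v -> gmul v u = gmul u v)
    by (intros u v Au; apply gen_comm; auto).
  induction w as [[t|c]| |u IHu u' IHu'|u IHu]; simpl; intros Hw.
  - reflexivity.
  - now rewrite gmulx1.
  - now rewrite gmul1.
  - destruct Hw as [Hu Hu']. rewrite IHu, IHu' by assumption.
    rewrite <- !gmulA. f_equal. rewrite !gmulA. f_equal.
    apply comm_gen.
    + apply (weval_assign_in A A); auto.
    + apply (weval_assign_in (gen Y) A); auto using gen_subgroup, gen_base, gen_one.
  - rewrite IHu, ginvM by assumption. apply comm_gen.
    + apply (proj2 (proj2 HA)), (weval_assign_in A A); auto.
    + apply gen_inv, (weval_assign_in (gen Y) A); auto using gen_subgroup, gen_base, gen_one.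
Qed.

Fixpoint drop_params {X P : Type} (w : word (X + P)) : word (X + P) :=
  match w with
  | wvar (inl t) => wvar (inl t)
  | wvar (inr _) => wone
  | wone => wone
  | wmul u u' => wmul (drop_params u) (drop_params u')
  | winv u => winv (drop_params u)
  end.

Lemma params_in_drop_params {X P : Type} (A : P -> Prop) (w : word (X + P)) :
  params_in A (drop_params w).
Proof. induction w as [[t|c]| |u IHu u' IHu'|u IHu]; simpl; auto. Qed.

Lemma weval_drop_params {X P : Type} {H : group} (x : X -> H) (p : P -> H) (w : word (X + P)) :
  weval (assign x p) (drop_params w) = weval (assign x (fun _ => gone)) w.
Proof. induction w as [[t|c]| |u IHu u' IHu'|u IHu]; simpl; congruence. Qed.

(* The image of [W] in the reduced power [H^nat / Frechet] under the maps [h m]: elements of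
   [W] are identified when [h m] agrees on them for all large [m].  Classes are represented
   as predicates, so the quotient needs propositional and functional extensionality. *)
Section EventualQuotient.

Context {W : Type} {H : group} (h : nat -> W -> H)
  (mul : W -> W -> W) (inv : W -> W) (one : W).
Hypothesis h_mul : forall m x y, h m (mul x y) = gmul (h m x) (h m y).
Hypothesis h_inv : forall m x, h m (inv x) = ginv (h m x).
Hypothesis h_one : forall m, h m one = gone.

Definition eventually_eq (x y : W) : Prop :=
  exists N, forall m, N <= m -> h m x = h m y.

Lemma eventually_eq_of_all x y : (forall m, h m x = h m y) -> eventually_eq x y.
Proof. intro E; now exists 0. Qed.

Lemma eventually_eq_trans x y z : eventually_eq x y -> eventually_eq y z -> eventually_eq x z.
Proof.
  intros [N HN] [M HM]; exists (N + M); intros m Hm.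
  rewrite HN, HM; auto; lia.
Qed.

Lemma eventually_eq_sym x y : eventually_eq x y -> eventually_eq y x.
Proof. intros [N HN]; exists N; intros m Hm; symmetry; auto. Qed.

Definition qcar : Type := {P : W -> Prop | exists x, P = eventually_eq x}.

Definition qclass (x : W) : qcar := exist _ (eventually_eq x) (ex_intro _ x eq_refl).

Lemma qclass_eq x y : qclass x = qclass y <-> eventually_eq x y.
Proof.
  split.
  - intro E. apply (f_equal (@proj1_sig _ _)) in E. simpl in E.
    rewrite E. now apply eventually_eq_of_all.
  - intro Exy. unfold qclass.
    assert (E : eventually_eq x = eventually_eq y).
    { apply functional_extensionality; intro z. apply propositional_extensionality.
      split; eauto using eventually_eq_trans, eventually_eq_sym. }
    apply eq_sig_hprop; [intros; apply proof_irrelevance | exact E].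
Qed.

Definition qrepr (X : qcar) : W :=
  proj1_sig (constructive_indefinite_description _ (proj2_sig X)).

Lemma qclass_repr X : qclass (qrepr X) = X.
Proof.
  unfold qrepr. destruct (constructive_indefinite_description _ _) as [x Ex]; simpl.
  destruct X as [P HP]. apply eq_sig_hprop; [intros; apply proof_irrelevance|].
  simpl in *. now symmetry.
Qed.

Lemma qclass_surj X : exists x, X = qclass x.
Proof. exists (qrepr X). symmetry; apply qclass_repr. Qed.

Definition qmul (X Y : qcar) : qcar := qclass (mul (qrepr X) (qrepr Y)).
Definition qinv (X : qcar) : qcar := qclass (inv (qrepr X)).
Definition qone : qcar := qclass one.

Lemma qmul_class x y : qmul (qclass x) (qclass y) = qclass (mul x y).
Proof.
  apply qclass_eq.
  destruct (proj1 (qclass_eq _ _) (qclass_repr (qclass x))) as [N HN].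
  destruct (proj1 (qclass_eq _ _) (qclass_repr (qclass y))) as [M HM].
  exists (N + M); intros m Hm. rewrite !h_mul, HN, HM; auto; lia.
Qed.

Lemma qinv_class x : qinv (qclass x) = qclass (inv x).
Proof.
  apply qclass_eq.
  destruct (proj1 (qclass_eq _ _) (qclass_repr (qclass x))) as [N HN].
  exists N; intros m Hm. rewrite !h_inv, HN; auto.
Qed.

Lemma qmulA X Y Z : qmul X (qmul Y Z) = qmul (qmul X Y) Z.
Proof.
  destruct (qclass_surj X) as [x ->], (qclass_surj Y) as [y ->], (qclass_surj Z) as [z ->].
  rewrite !qmul_class. apply qclass_eq, eventually_eq_of_all; intro m.
  rewrite !h_mul. apply gmulA.
Qed.

Lemma qmul1 X : qmul qone X = X.
Proof.
  destruct (qclass_surj X) as [x ->]. unfold qone. rewrite qmul_class.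
  apply qclass_eq, eventually_eq_of_all; intro m. rewrite h_mul, h_one. apply gmul1.
Qed.

Lemma qmulV X : qmul (qinv X) X = qone.
Proof.
  destruct (qclass_surj X) as [x ->]. rewrite qinv_class, qmul_class.
  apply qclass_eq, eventually_eq_of_all; intro m. rewrite h_mul, h_inv, h_one. apply gmulV.
Qed.

Definition eventual_quotient : group := Group qcar qmul qinv qone qmulA qmul1 qmulV.

Lemma qclass_mul x y :
  qclass (mul x y) = gmul (g := eventual_quotient) (qclass x) (qclass y).
Proof. symmetry; apply qmul_class. Qed.

Lemma qclass_inv x : qclass (inv x) = ginv (g := eventual_quotient) (qclass x).
Proof. symmetry; apply qinv_class. Qed.

End EventualQuotient.

Section Tower.

Context {I : Type} {U : group} {G : nat -> U -> Prop} {a : I -> nat -> U}.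
Hypothesis HGsub : forall n, is_subgroup (G n).
Hypothesis HGinc : forall n x, G n x -> G (S n) x.
Hypothesis HGlf : forall n, locally_finite (G n).
Hypothesis Ha : forall t n, G (S n) (a t n).
Hypothesis Halpha : forall n (phi : bformula I U),
  tp_bs (fun t => a t n) (G n) (fun x => x) phi ->
  tp_bs (fun t => a t (S n)) (G (S n)) (fun x => x) phi.
Hypothesis Hbeta : forall n x, gen (fun y => exists t, y = a t n) x -> G n x -> x = gone.
Hypothesis He : forall t n g, G n g -> gmul (a t n) g = gmul g (a t n).

Lemma G_mono n m x : n <= m -> G n x -> G m x.
Proof. intro Hle; induction Hle; auto. Qed.

Lemma params_in_G_mono n m (w : word (I + U)) : n <= m -> params_in (G n) w -> params_in (G m) w.
Proof. intro Hle; apply params_in_mono; intro; apply G_mono, Hle. Qed.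

Lemma bprod_in t m : G (S m) (bprod a t m).
Proof.
  induction m as [|m IHm]; simpl; auto.
  apply (HGsub (S (S m))); auto.
Qed.

(* [bpre t m] is [b^t_(m-1)], with [b^t_(-1) = e]. *)
Definition bpre (t : I) (m : nat) : U :=
  match m with O => gone | S k => bprod a t k end.

Lemma bpre_in t m : G m (bpre t m).
Proof. destruct m; simpl; [apply HGsub | apply bprod_in]. Qed.

Lemma bprod_bpre t m : bprod a t m = gmul (bpre t m) (a t m).
Proof. destruct m; simpl; [now rewrite gmul1 | reflexivity]. Qed.

Definition bval (m : nat) : I + U -> U := assign (fun t => bprod a t m) (fun c => c).
Definition aval (m : nat) : I + U -> U := assign (fun t => a t m) (fun _ => gone).

Lemma weval_bval_split m w : params_in (G m) w ->
  weval (bval m) w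
  = gmul (weval (assign (fun t => bpre t m) (fun c => c)) w) (weval (aval m) w).
Proof.
  intro Hw. unfold bval.
  replace (fun t => bprod a t m) with (fun t => gmul (bpre t m) (a t m))
    by (apply functional_extensionality; intro; symmetry; apply bprod_bpre).
  apply (weval_assign_mul (G m) (fun s => exists t, s = a t m)); auto using bpre_in.
  - intros u s Gu [t ->]. auto.
  - eauto.
Qed.

Lemma weval_bval_eq1 m w : params_in (G m) w ->
  weval (bval m) w = gone <->
  weval (assign (fun t => bpre t m) (fun c => c)) w = gone /\ weval (aval m) w = gone.
Proof.
  intro Hw. rewrite weval_bval_split by exact Hw.
  set (u := weval (assign _ _) w). set (v := weval (aval m) w).
  assert (Gu : G m u) by (apply (weval_assign_in (G m) (G m)); auto using bpre_in).
  assert (Gv : gen (fun y => exists t, y = a t m) v).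
  { apply (weval_assign_in _ (G m)); eauto using gen_subgroup, gen_base, gen_one. }
  split.
  - intro E. assert (v1 : v = gone).
    { apply (Hbeta m); auto. rewrite (ginv_unique _ _ _ E). apply (HGsub m), Gu. }
    rewrite v1, gmulx1 in E. auto.
  - intros [-> ->]. apply gmul1.
Qed.

Lemma weval_aval_step n w : weval (aval n) w = gone -> weval (aval (S n)) w = gone.
Proof.
  intro E.
  destruct (Halpha n (true, drop_params w)) as [_ E'].
  - split; [apply params_in_drop_params|]. simpl.
    change (weval (assign (fun t => a t n) (fun x => x)) (drop_params w) = gone).
    now rewrite weval_drop_params.
  - change (weval (assign (fun t => a t (S n)) (fun x => x)) (drop_params w) = gone) in E'.
    now rewrite weval_drop_params in E'.
Qed.

Lemma weval_bval_eq1_S m w : params_in (G m) w ->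
  weval (bval (S m)) w = gone <-> weval (bval m) w = gone.
Proof.
  intro Hw. rewrite (weval_bval_eq1 (S m)) by (apply (params_in_G_mono m); auto).
  split; [tauto|]. intro E. split; [exact E|].
  apply weval_aval_step, (weval_bval_eq1 m w Hw), E.
Qed.

Lemma weval_bval_eq1_stable n m w : n <= m -> params_in (G n) w ->
  weval (bval m) w = gone <-> weval (bval n) w = gone.
Proof.
  intros Hle Hw; induction Hle as [|m Hle IH]; [tauto|].
  rewrite <- IH. apply weval_bval_eq1_S, (params_in_G_mono n); auto.
Qed.

Definition Gomega (x : U) : Prop := exists n, G n x.

Lemma params_in_Gomega n (w : word (I + U)) : params_in (G n) w -> params_in Gomega w.
Proof. apply params_in_mono. intros c Hc. now exists n. Qed.

Lemma params_in_Gomega_level (w : word (I + U)) :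
  params_in Gomega w -> exists n, params_in (G n) w.
Proof.
  induction w as [[t|c]| |u IHu u' IHu'|u IHu]; simpl; try (exists 0; exact Logic.I).
  - intros [n Hn]. now exists n.
  - intros [Hu Hu']. destruct (IHu Hu) as [n Hn], (IHu' Hu') as [n' Hn'].
    exists (n + n'). split; [apply (params_in_G_mono n) | apply (params_in_G_mono n')];
      auto; lia.
  - exact IHu.
Qed.

Definition gword : Type := {w : word (I + U) | params_in Gomega w}.

Definition gw_mul (w w' : gword) : gword :=
  exist _ (wmul (proj1_sig w) (proj1_sig w')) (conj (proj2_sig w) (proj2_sig w')).
Definition gw_inv (w : gword) : gword := exist _ (winv (proj1_sig w)) (proj2_sig w).
Definition gw_one : gword := exist _ wone Logic.I.

Definition ev (m : nat) (w : gword) : U := weval (bval m) (proj1_sig w).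

Definition Vgroup : group :=
  eventual_quotient ev gw_mul gw_inv gw_one
    (fun _ _ _ => eq_refl) (fun _ _ => eq_refl) (fun _ => eq_refl).

Definition vclass (w : gword) : Vgroup := qclass ev w.

Lemma vclass_mul w w' : vclass (gw_mul w w') = gmul (vclass w) (vclass w').
Proof. apply qclass_mul. Qed.

Lemma vclass_inv w : vclass (gw_inv w) = ginv (vclass w).
Proof. apply qclass_inv. Qed.

Lemma vclass_eq w w' : vclass w = vclass w' <-> eventually_eq ev w w'.
Proof. apply qclass_eq. Qed.

Lemma vclass_surj (z : Vgroup) : exists w, z = vclass w.
Proof. apply qclass_surj. Qed.

Lemma vclass_word w w' : proj1_sig w = proj1_sig w' -> vclass w = vclass w'.
Proof. intro E. apply vclass_eq, eventually_eq_of_all; intro m. unfold ev. now rewrite E. Qed.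

Definition level (n : nat) (w : gword) : Prop := params_in (G n) (proj1_sig w).

Lemma vclass_eq_level n w w' : level n w -> level n w' ->
  vclass w = vclass w' <-> ev n w = ev n w'.
Proof.
  intros Hw Hw'. rewrite vclass_eq.
  assert (Hq : params_in (G n) (proj1_sig (gw_mul w (gw_inv w')))) by (split; auto).
  assert (stable : forall m, n <= m -> ev m w = ev m w' <-> ev n w = ev n w').
  { intros m Hm. rewrite !(eq_mulV1 _ (ev _ w)).
    exact (weval_bval_eq1_stable n m _ Hm Hq). }
  split.
  - intros [N HN]. apply (stable (N + n)); [lia | apply HN; lia].
  - intro E. exists n. intros m Hm. now apply stable.
Qed.

Lemma gword_level w : exists n, level n w.
Proof. apply params_in_Gomega_level, proj2_sig. Qed.

Definition fV (x : U) : Vgroup :=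
  match excluded_middle_informative (Gomega x) with
  | left H => vclass (exist _ (wvar (inr x)) H)
  | right _ => gone
  end.

Definition bV (t : I) : Vgroup := vclass (exist _ (wvar (inl t)) Logic.I).

Lemma fV_vclass x (H : Gomega x) : fV x = vclass (exist _ (wvar (inr x)) H).
Proof.
  unfold fV. destruct (excluded_middle_informative (Gomega x)); [|contradiction].
  now apply vclass_word.
Qed.

Lemma weval_bV_fV (w : gword) : weval (assign bV fV) (proj1_sig w) = vclass w.
Proof.
  destruct w as [w p]; simpl.
  induction w as [[t|c]| |u IHu u' IHu'|u IHu]; simpl.
  - now apply vclass_word.
  - apply fV_vclass.
  - exact (vclass_word gw_one (exist _ wone p) eq_refl).
  - destruct p as [p p']. rewrite (IHu p), (IHu' p'). symmetry.
    exact (vclass_mul (exist _ u p) (exist _ u' p')).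
  - rewrite (IHu p). symmetry. exact (vclass_inv (exist _ u p)).
Qed.

Lemma tp_bs_bV n (phi : bformula I U) :
  tp_bs bV (G n) fV phi <-> tp_bs (fun t => bprod a t n) (G n) (fun x => x) phi.
Proof.
  destruct phi as [b w]. unfold tp_bs; simpl.
  enough (E : params_in (G n) w ->
              weval (assign bV fV) w = gone <-> weval (bval n) w = gone)
    by (destruct b; split; intros [Hw Hv]; split; auto; rewrite (E Hw) in *; auto).
  intro Hw.
  change (weval (assign bV fV) w) with
    (weval (assign bV fV) (proj1_sig (exist (params_in Gomega) w (params_in_Gomega n w Hw)))).
  rewrite weval_bV_fV.
  exact (vclass_eq_level n (exist _ w _) gw_one Hw Logic.I).
Qed.

Lemma fV_inj x y : Gomega x -> Gomega y -> fV x = fV y -> x = y.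
Proof.
  intros Hx Hy. rewrite (fV_vclass x Hx), (fV_vclass y Hy), vclass_eq.
  intros [N HN]. exact (HN N (le_n N)).
Qed.

Lemma Gomega_mul x y : Gomega x -> Gomega y -> Gomega (gmul x y).
Proof.
  intros [n Hx] [m Hy]. exists (n + m).
  apply (HGsub (n + m)); [apply (G_mono n) | apply (G_mono m)]; auto; lia.
Qed.

Lemma fV_mul x y : Gomega x -> Gomega y -> fV (gmul x y) = gmul (fV x) (fV y).
Proof.
  intros Hx Hy.
  rewrite (fV_vclass _ (Gomega_mul x y Hx Hy)), (fV_vclass x Hx), (fV_vclass y Hy),
    <- vclass_mul.
  now apply vclass_eq, eventually_eq_of_all.
Qed.

Lemma Vgroup_generated (z : Vgroup) :
  gen (fun y => (exists x, Gomega x /\ y = fV x) \/ (exists t, y = bV t)) z.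
Proof.
  destruct (vclass_surj z) as [w ->].
  rewrite <- weval_bV_fV. apply (weval_assign_in _ Gomega); auto using gen_subgroup.
  - intro t. apply gen_base. eauto.
  - intros x Hx. apply gen_base. eauto.
  - apply proj2_sig.
Qed.

Definition Vlevel (n : nat) (z : Vgroup) : Prop := exists w, level n w /\ z = vclass w.

Lemma Vlevel_mono n m z : n <= m -> Vlevel n z -> Vlevel m z.
Proof. intros Hle (w & Hw & ->). exists w. split; [apply (params_in_G_mono n)|]; auto. Qed.

Lemma Vlevel_subgroup n : is_subgroup (Vlevel n).
Proof.
  split; [|split].
  - now exists gw_one.
  - intros x y (w & Hw & ->) (w' & Hw' & ->). exists (gw_mul w w').
    split; [split; auto | symmetry; apply vclass_mul].
  - intros x (w & Hw & ->). exists (gw_inv w). split; [exact Hw | symmetry; apply vclass_inv].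
Qed.

(* Well defined on [Vlevel n] by [vclass_eq_level], this embeds [Vlevel n] into [G (S n)]. *)
Definition level_embedding (n : nat) (z : Vgroup) : U :=
  ev n (epsilon (inhabits gw_one) (fun w => level n w /\ vclass w = z)).

Lemma level_embedding_vclass n w : level n w -> level_embedding n (vclass w) = ev n w.
Proof.
  intro Hw. unfold level_embedding.
  destruct (epsilon_spec (inhabits gw_one) (fun w' => level n w' /\ vclass w' = vclass w))
    as [Hw' E]; [eauto|].
  now apply (vclass_eq_level n) in E.
Qed.

Lemma Vlevel_locally_finite n : locally_finite (Vlevel n).
Proof.
  apply (locally_finite_of_embedding _ _ _ (G (S n)) (level_embedding n));
    auto using Vlevel_subgroup.
  - intros z (w & Hw & ->). rewrite level_embedding_vclass by exact Hw.
    apply (weval_assign_in _ (G n)); auto using bprod_in.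
  - intros z z' (w & Hw & ->) (w' & Hw' & ->).
    rewrite <- vclass_mul, !level_embedding_vclass; auto. split; auto.
  - intros z z' (w & Hw & ->) (w' & Hw' & ->).
    rewrite !level_embedding_vclass by assumption. apply vclass_eq_level; auto.
Qed.

Lemma Vgroup_locally_finite : locally_finite (fun _ : Vgroup => True).
Proof.
  intros l _.
  assert (Hl : exists n, forall z, In z l -> Vlevel n z).
  { induction l as [|z l [n IH]]; [exists 0; intros _ []|].
    destruct (vclass_surj z) as [w ->], (gword_level w) as [m Hm].
    exists (n + m). intros z [<-|Hz].
    - apply (Vlevel_mono m); [lia | now exists w].
    - apply (Vlevel_mono n); auto; lia. }
  destruct Hl as [n Hl]. exact (Vlevel_locally_finite n l Hl).
Qed.

End Tower.

Theorem claim2p20 (I : Type) (U : group) (G : nat -> U -> Prop)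
  (a : I -> nat -> U)
  (HGsub : forall n, is_subgroup (G n))
  (HGinc : forall n x, G n x -> G (S n) x)
  (HGlf : forall n, locally_finite (G n))
  (Ha : forall t n, G (S n) (a t n))
  (Halpha : forall n (phi : bformula I U),
      tp_bs (fun t => a t n) (G n) (fun x => x) phi ->
      tp_bs (fun t => a t (S n)) (G (S n)) (fun x => x) phi)
  (Hbeta : forall n x, gen (fun y => exists t, y = a t n) x -> G n x -> x = gone)
  (He : forall t n g, G n g -> gmul (a t n) g = gmul g (a t n)) :
  let Gomega := fun x : U => exists n, G n x in
  exists (V : group) (f : U -> V) (bomega : I -> V),
    locally_finite (fun _ : V => True) /\
    (forall x y, Gomega x -> Gomega y -> f x = f y -> x = y) /\
    (forall x y, Gomega x -> Gomega y -> f (gmul x y) = gmul (f x) (f y)) /\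
    (forall z : V, gen (fun y => (exists x, Gomega x /\ y = f x) \/
                                 (exists t, y = bomega t)) z) /\
    (forall n (phi : bformula I U),
        tp_bs bomega (G n) f phi <-> tp_bs (fun t => bprod a t n) (G n) (fun x => x) phi).
Proof.
  intros Gomega. exists (@Vgroup I U G a), fV, bV.
  split; [exact (Vgroup_locally_finite HGsub HGinc HGlf Ha Halpha Hbeta He)|].
  split; [exact fV_inj|].
  split; [exact (fV_mul HGsub HGinc)|].
  split; [exact Vgroup_generated|].
  exact (tp_bs_bV HGsub HGinc Ha Halpha Hbeta He).
Qed.
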